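(* If $\mathcal C$ denotes the epireflective subcategory of $\mathbf{Top}$ defined by any one of the separation axioms $T_0$, $T_1$, $T_2$, functionally Hausdorff, then $\mathrm{r}_{\mathcal C}$ preserves arbitrary products of semitopological Mal'tsev spaces: for every family $\{X_i\}$ of semitopological Mal'tsev spaces, the canonical map $\mu_{\mathcal C}\colon\mathrm{r}_{\mathcal C}\prod X_i\to\prod\mathrm{r}_{\mathcal C}X_i$ is a homeomorphism.
   Context: For an epireflective subcategory $\mathcal C$ of $\mathbf{Top}$, $\mathrm{r}_{\mathcal C}X$ is the reflection of $X$ in $\mathcal C$ with universal continuous surjection $\mathrm{r}_{(X,\mathcal C)}$, and $\mu_{\mathcal C}$ is the unique continuous map with $\pi_j\circ\mu_{\mathcal C}=\mathrm{r}_{\mathcal C}(\pi_{X_j})$ for all $j$. A Mal'tsev operation on $X$ is a map $\Phi\colon X^3\to X$ with $\Phi(x,x,y)=\Phi(y,x,x)=y$; a semitopological Mal'tsev space is a space admitting a separately continuous Mal'tsev operation. A space is functionally Hausdorff if distinct points are separated by a real-valued continuous function. *)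

From HB Require Import structures.
From mathcomp Require Import all_boot all_order all_algebra.
From mathcomp Require Import all_classical all_reals all_analysis.
From mathcomp Require Import Rstruct Rstruct_topology.
Set Implicit Arguments. Unset Strict Implicit. Unset Printing Implicit Defensive.
Local Open Scope classical_set_scope.

Inductive sep_axiom := T0 | T1 | T2 | FunHausdorff.

Definition functionally_hausdorff (X : topologicalType) : Prop :=
  forall x y : X, x <> y ->
    exists f : X -> Rdefinitions.R, continuous f /\ f x <> f y.

Definition inC (c : sep_axiom) (X : topologicalType) : Prop :=
  match c with
  | T0 => @kolmogorov_space X
  | T1 => @accessible_space X
  | T2 => @hausdorff_space X
  | FunHausdorff => functionally_hausdorff X
  end.

Definition is_reflection (c : sep_axiom) (X RX : topologicalType)
    (r : X -> RX) : Prop :=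
  [/\ inC c RX, continuous r, (forall y : RX, exists x, r x = y) &
      forall (Y : topologicalType) (f : X -> Y), inC c Y -> continuous f ->
        exists! g : RX -> Y, continuous g /\ (forall x, g (r x) = f x)].

Definition maltsev_op (X : Type) (Phi : X -> X -> X -> X) : Prop :=
  forall x y : X, Phi x x y = y /\ Phi y x x = y.

Definition separately_continuous (X : topologicalType)
    (Phi : X -> X -> X -> X) : Prop :=
  (forall b c : X, continuous (fun a => Phi a b c)) /\
  (forall a c : X, continuous (fun b => Phi a b c)) /\
  (forall a b : X, continuous (fun c => Phi a b c)).

Definition semitopological_maltsev (X : topologicalType) : Prop :=
  exists Phi : X -> X -> X -> X, maltsev_op Phi /\ separately_continuous Phi.

Definition homeomorphism (X Y : topologicalType) (f : X -> Y) : Prop :=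
  exists g : Y -> X, [/\ continuous f, continuous g,
    (forall x, g (f x) = x) & (forall y, f (g y) = y)].

From HB Require Import structures.
From mathcomp Require Import all_boot all_order all_algebra.
From mathcomp Require Import all_classical all_reals all_analysis.
From mathcomp Require Import Rstruct Rstruct_topology.
Set Implicit Arguments. Unset Strict Implicit. Unset Printing Implicit Defensive.
Local Open Scope classical_set_scope.

(* Every space of C is T0 and C is closed under continuous injections, so a
   reflection r : X -> rX is a quotient map (the final topology of r lies in
   C).  If X has a separately continuous Mal'tsev operation Phi, r is open:
   when r x = r u with u in an open U, t |-> Phi t x u maps a neighbourhood
   of x into U, and r (Phi t x u) = r (Phi t u u) = r t.
   For a product, the reflection r_P of prod X_i is constant on the fibres
   of q := prod r_i: a basic neighbourhood restricts finitely many
   coordinates, and moving one coordinate inside a fibre of r_j does not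
   change r_P, so two points of a fibre have topologically indistinguishable
   images, which are equal since r_P lands in a T0 space.  Hence r_P = g o q,
   and g is continuous because q, a product of open surjections, is open;
   g is the inverse of mu. *)

Lemma cluster_nbhs_continuous (T U : topologicalType) (f : T -> U) (p q : T) :
  continuous f -> cluster (nbhs p) q -> cluster (nbhs (f p)) (f q).
Proof.
move=> cf pq A B /cf nA /cf nB; have [z [Az Bz]] := pq _ _ nA nB.
by exists (f z).
Qed.

Lemma functionally_hausdorff_hausdorff (T : topologicalType) :
  functionally_hausdorff T -> hausdorff_space T.
Proof.
move=> fT p q pq; apply: contrapT => /fT [f [cf]]; apply.
exact: Rhausdorff (cluster_nbhs_continuous cf pq).
Qed.

Lemma inC_kolmogorov c (T : topologicalType) : inC c T -> kolmogorov_space T.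
Proof.
have T2_T0 : hausdorff_space T -> kolmogorov_space T.
  by move/hausdorff_accessible/accessible_kolmogorov.
case: c => /=; [done | exact: accessible_kolmogorov | exact: T2_T0 |
  by move/functionally_hausdorff_hausdorff/T2_T0].
Qed.

Lemma kolmogorov_nbhs_eq (T : topologicalType) (p q : T) : kolmogorov_space T ->
  (forall A, nbhs p A -> A q) -> (forall A, nbhs q A -> A p) -> p = q.
Proof.
move=> T0 pq qp; apply/eqP/negPn/negP => /T0 [A [[]|[]]]; rewrite !inE.
  by move/pq.
by move/qp.
Qed.

Section continuous_injection.
Variables (T U : topologicalType) (h : T -> U).
Hypotheses (ch : continuous h) (ih : injective h).

Let neq_h (x y : T) : x != y -> h x != h y.
Proof. by apply: contra => /eqP /ih ->. Qed.

Lemma kolmogorov_inj : kolmogorov_space U -> kolmogorov_space T.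
Proof.
move=> T0 x y /neq_h /T0 [A [[]|[]]]; rewrite !inE => nA nAy;
  exists (h @^-1` A); [left|right]; rewrite !inE; split => //; exact: ch.
Qed.

Lemma accessible_inj : accessible_space U -> accessible_space T.
Proof.
move=> T1 x y /neq_h /T1 [A [oA]]; rewrite !inE => Ax nAy.
by exists (h @^-1` A); rewrite !inE; split => //; exact: open_comp.
Qed.

Lemma hausdorff_inj : hausdorff_space U -> hausdorff_space T.
Proof. by move=> T2 p q /(cluster_nbhs_continuous ch) /T2 /ih. Qed.

Lemma functionally_hausdorff_inj :
  functionally_hausdorff U -> functionally_hausdorff T.
Proof.
move=> FH x y xy; have [f [cf fxy]] := FH (h x) (h y) (fun e => xy (ih e)).
by exists (f \o h); split => // z; apply: continuous_comp; [exact: ch | exact: cf].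
Qed.

Lemma inC_inj c : inC c U -> inC c T.
Proof.
case: c; [exact: kolmogorov_inj | exact: accessible_inj | exact: hausdorff_inj |
  exact: functionally_hausdorff_inj].
Qed.

End continuous_injection.

Definition final_topology {S T : Type} (f : S -> T) : Type := T.

Section Final_Topology.
Variables (S : topologicalType) (T : choiceType) (f : S -> T).
Local Notation Q := (final_topology f).

HB.instance Definition _ := Choice.on Q.

Definition final_open : set_system Q := [set U | open (f @^-1` U)].

Let final_openT : final_open [set: Q].
Proof. by rewrite /final_open /= preimage_setT; exact: openT. Qed.

Let final_openI : setI_closed final_open.
Proof. by move=> A B; rewrite /final_open /= preimage_setI; exact: openI. Qed.

Let final_open_bigU (I : Type) (F : I -> set Q) :
  (forall i, final_open (F i)) -> final_open (\bigcup_i F i).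
Proof.
move=> oF; rewrite /final_open /= preimage_bigcup.
by apply: bigcup_open => i _; exact: oF.
Qed.

HB.instance Definition _ :=
  isOpenTopological.Build Q final_openT final_openI final_open_bigU.

Lemma final_openE (U : set Q) : open U = open (f @^-1` U).
Proof. by []. Qed.

Lemma final_continuous : continuous (f : S -> Q).
Proof. by apply/continuousP => A; rewrite final_openE. Qed.

End Final_Topology.

Section reflection.
Variables (c : sep_axiom) (X RX : topologicalType) (r : X -> RX).
Hypothesis reflr : is_reflection c r.

Lemma reflection_factor (Y : topologicalType) (f : X -> Y) :
  inC c Y -> continuous f -> forall a b, r a = r b -> f a = f b.
Proof.
case: reflr => _ _ _ univ CY cf a b rab.
by have [g [[_ gr] _]] := univ Y f CY cf; rewrite -!gr rab.
Qed.

Lemma reflection_quotient (U : set RX) : open (r @^-1` U) -> open U.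
Proof.
case: reflr => CRX cr sr univ oU.
have CQ : inC c (final_topology r).
  apply: (@inC_inj _ RX (fun y : final_topology r => y : RX)) => //.
  by apply/continuousP => A oA; rewrite final_openE; move/continuousP: cr; apply.
have [g [[cg gr] _]] := univ _ _ CQ (@final_continuous _ _ r).
have gid y : g y = y by have [x <-] := sr y; exact: gr.
have -> : U = g @^-1` U by apply/seteqP; split => y /=; rewrite gid.
by move/continuousP: cg; apply; rewrite final_openE.
Qed.

Lemma reflection_open : semitopological_maltsev X ->
  forall U : set X, open U -> open (r @` U).
Proof.
move=> [Phi [maltsev [cPhi1 [cPhi2 _]]]] U oU; apply: reflection_quotient.
have [CRX cr _ _] := reflr.
rewrite openE => x [u Uu rux].
have nPhiU : nbhs x ((fun t => Phi t x u) @^-1` U).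
  by apply: cPhi1; apply: open_nbhs_nbhs; split => //=; rewrite (maltsev x u).1.
apply: filterS nPhiU => t /= UPhi; exists (Phi t x u) => //.
have <- : r (Phi t u u) = r t by rewrite (maltsev u t).2.
apply: (@reflection_factor _ (fun s => r (Phi t s u))) => //.
by move=> s; apply: continuous_comp; [exact: cPhi2 | exact: cr].
Qed.

End reflection.

Definition prod_map (I : Type) (X Y : I -> Type) (f : forall i, X i -> Y i)
  (x : forall i, X i) : forall i, Y i := fun i => f i (x i).

Lemma prod_map_surj (I : Type) (X Y : I -> Type) (f : forall i, X i -> Y i) :
  (forall i y, exists t, f i t = y) -> forall y, exists x, prod_map f x = y.
Proof.
move=> sf y; have [x xy] := all_sig (fun i => cid (sf i (y i))).
by exists x; apply: functional_extensionality_dep.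
Qed.

Section product_boxes.
Context {I : eqType} {X : I -> topologicalType}.
Implicit Types (x : prod_topology X) (L : seq I) (V : forall i, set (X i)).

Definition box L V : set (prod_topology X) :=
  [set z | forall i, i \in L -> V i (z i)].

Let box_filter x : set_system (prod_topology X) :=
  [set A | exists L V, (forall i, open_nbhs (x i) (V i)) /\ box L V `<=` A].

Let box_filter_filter x : Filter (box_filter x).
Proof.
split.
- by exists [::], (fun=> setT); split => // i; exact: open_nbhsT.
- move=> A B [L [V [nV VA]]] [M [W [nW WB]]].
  exists (L ++ M), (fun i => V i `&` W i); split; first by move=> i; exact: open_nbhsI.
  move=> z zVW; split; [apply: VA | apply: WB] => i iLM;
    by case: (zVW i) => //; rewrite mem_cat iLM ?orbT.
- by move=> A B AB [L [V [nV VA]]]; exists L, V; split => //; exact: subset_trans AB.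
Qed.

Lemma nbhs_box x A : nbhs x A ->
  exists L V, (forall i, open_nbhs (x i) (V i)) /\ box L V `<=` A.
Proof.
have FF := box_filter_filter x.
suff : box_filter x --> (x : product_topology_def X) by move/(_ A).
apply/cvg_sup => i B; rewrite nbhsE => -[C [[D oD DC] Cx] CB].
exists [:: i], (dfwith (fun j => [set: X j]) i D); split.
  move=> j; case: dfwithP => [|{}j _]; last exact: open_nbhsT.
  by split => //; move: Cx; rewrite -DC.
by move=> z /(_ i); rewrite mem_head dfwithin => /(_ isT) Dz; apply: CB; rewrite -DC.
Qed.

Lemma box_nbhs x L V :
  (forall i, i \in L -> nbhs (x i) (V i)) -> nbhs x (box L V).
Proof.
elim: L => [_|j L IH nV]; first by apply: filterS filterT => z _ i.
have nVj : nbhs x [set z : prod_topology X | V j (z j)].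
  by apply: proj_continuous; apply: nV; exact: mem_head.
have nVL i : i \in L -> nbhs (x i) (V i) by move=> iL; apply: nV; rewrite inE iL orbT.
apply: filterS (filterI nVj (IH nVL)).
by move=> z [Vzj Vz] i; rewrite inE => /predU1P [->|]; [exact: Vzj | exact: Vz].
Qed.

End product_boxes.

Lemma open_prod_map (I : eqType) (X Y : I -> topologicalType)
    (f : forall i, X i -> Y i) :
  (forall i y, exists t, f i t = y) -> (forall i U, open U -> open (f i @` U)) ->
  forall A : set (prod_topology X),
    open A -> open (prod_map f @` A : set (prod_topology Y)).
Proof.
move=> sf fo A; rewrite !openE => oA _ [x Ax <-].
have [L [V [nV VA]]] := nbhs_box (oA x Ax).
apply: (filterS (P := box L (fun i => f i @` V i))); last first.
  apply: box_nbhs => i _; apply: open_nbhs_nbhs; split; first exact: fo _ _ (nV i).1.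
  by exists (x i) => //; exact: (nV i).2.
move=> z zfV.
have preim i : exists t, (i \in L -> V i t) /\ f i t = z i.
  have [iL|iNL] := boolP (i \in L).
    by have [t Vt <-] := zfV i iL; exists t.
  by have [t <-] := sf i (z i); exists t; split => // iL; rewrite iL in iNL.
have [t tP] := all_sig (fun i => cid (preim i)).
exists t; first by apply: VA => i; exact: (tP i).1.
by apply: functional_extensionality_dep => i; exact: (tP i).2.
Qed.

Section reflection_of_product.
Local Unset Implicit Arguments.
Variables (c : sep_axiom) (I : eqType) (X RX : I -> topologicalType).
Variables (r : forall i, X i -> RX i) (RP : topologicalType).
Variable rP : prod_topology X -> RP.
Hypotheses (reflr : forall i, is_reflection c (r i)) (reflP : is_reflection c rP).

Lemma reflection_prod_dfwith (x : prod_topology X) j (t : X j) :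
  r j t = r j (x j) -> rP (dfwith x j t) = rP x.
Proof.
case: reflP => CRP cP _ _ rt.
transitivity (rP (dfwith x j (x j))); last first.
  by congr rP; apply: functional_extensionality_dep => i; case: dfwithP.
have cdfw : continuous (dfwith x j : X j -> prod_topology X).
  exact: dfwith_continuous.
have cf : continuous (fun s => rP (dfwith x j s)).
  by move=> s; exact: (continuous_comp (cdfw s) (cP _)).
exact: (reflection_factor (reflr j) CRP cf rt).
Qed.

Lemma reflection_prod_fibre_seq (L : seq I) (x x' : prod_topology X) :
  prod_map r x = prod_map r x' -> (forall i, i \notin L -> x i = x' i) ->
  rP x = rP x'.
Proof.
elim: L x' => [|j L IH] x' rxx' xx'.
  by congr rP; apply: functional_extensionality_dep => i; exact: xx'.
have rxx'_at i : r i (x i) = r i (x' i) by exact: (congr1 (fun y => y i) rxx').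
transitivity (rP (dfwith x' j (x j))); last exact: reflection_prod_dfwith (rxx'_at j).
apply: IH => [|i iNL].
  by apply: functional_extensionality_dep => i; rewrite /prod_map; case: dfwithP.
have [<-|ji] := eqVneq j i; first by rewrite dfwithin.
by rewrite dfwithout //; apply: xx'; rewrite in_cons negb_or eq_sym ji.
Qed.

Lemma reflection_prod_fibre (x x' : prod_topology X) :
  prod_map r x = prod_map r x' -> rP x = rP x'.
Proof.
case: reflP => CRP cP _ _.
suff nbhs_fibre y y' : prod_map r y = prod_map r y' ->
    forall A, nbhs (rP y') A -> A (rP y).
  move=> rxx'; apply: (kolmogorov_nbhs_eq (inC_kolmogorov CRP)); apply: nbhs_fibre => //.
move=> ryy' A /cP /nbhs_box [L [V [nV VA]]].
pose z i := if i \in L then y' i else y i.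
have -> : rP y = rP z.
  apply: (@reflection_prod_fibre_seq L) => [|i /negbTE iNL]; last by rewrite /z iNL.
  apply: functional_extensionality_dep => i; rewrite /prod_map /z.
  by case: ifP => // _; exact: (congr1 (fun y => y i) ryy').
by apply: VA => i iL; rewrite /z iL; exact: (nV i).2.
Qed.

End reflection_of_product.

Theorem corollary4p10 (c : sep_axiom) (I : Type) (X : I -> topologicalType)
  (RX : I -> topologicalType) (r : forall i, X i -> RX i)
  (RP : topologicalType) (rP : prod_topology X -> RP)
  (mu : RP -> prod_topology RX) :
  (forall i, semitopological_maltsev (X i)) ->
  (forall i, is_reflection c (r i)) ->
  is_reflection c rP ->
  continuous mu ->
  (forall (x : prod_topology X) (j : I), mu (rP x) j = r j (x j)) ->
  homeomorphism mu.
Proof.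
move=> maltsevX reflr reflP cmu mu_rP.
have [_ cP sP _] := reflP.
have fibre := @reflection_prod_fibre c {classic I} X RX r RP rP reflr reflP.
have mu_rPE x : mu (rP x) = prod_map r x.
  by apply: functional_extensionality_dep; exact: mu_rP.
have sr i y : exists t, r i t = y by case: (reflr i) => _ _ sri _; exact: sri.
have [s sK] := choice (prod_map_surj sr).
exists (rP \o s); split => //.
- apply/continuousP => W oW.
  have -> : (rP \o s) @^-1` W = prod_map r @` (rP @^-1` W).
    apply/seteqP; split => y; first by exists (s y).
    by case=> x Wx <-; rewrite /= (fibre _ x) // sK.
  apply: (@open_prod_map {classic I}) => // [i|]; last exact: open_comp.
  exact: reflection_open (maltsevX i).
- by move=> p; have [x <-] := sP p; rewrite /= mu_rPE; apply: fibre; rewrite sK.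
- by move=> y; rewrite /= mu_rPE sK.
Qed.
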